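(* Let $f$ be an $n$-variable Boolean function. Then ${LDA}(f)=\min_{1\le k\le n}\mu_k(f+1)$. Furthermore, if $k\ge{LDA}(f)$, then $\mu_k(f+1)={LDA}(f)$.
   Context: An $n$-variable Boolean function is a map $\mathbb{F}_2^n\to\mathbb{F}_2$, with algebraic degree $\deg$ the degree of its algebraic normal form. ${LDA}(h)$ is the minimum algebraic degree of a nonzero $g$ with $h\cdot g=0$. For $1\le k\le n$, ${MUL}_k(h)=\{h\cdot g: g \text{ an } n\text{-variable Boolean function with } \deg(g)\le k\}$ and $\mu_k(h)$ is the minimum algebraic degree of the nonzero elements of ${MUL}_k(h)$. *)

(* Boolean functions F_2^n -> F_2, with F_2 = bool
   (addition = xor (addb), multiplication = andb). *)
From mathcomp Require Import all_boot all_order.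
Set Implicit Arguments. Unset Strict Implicit. Unset Printing Implicit Defensive.

Definition vec (n : nat) := {ffun 'I_n -> bool}.
Definition bfun (n : nat) := {ffun vec n -> bool}.

Definition bf_add n (f g : bfun n) : bfun n := [ffun x => f x (+) g x].
Definition bf_mul n (f g : bfun n) : bfun n := [ffun x => f x && g x].
Definition bf_zero n : bfun n := [ffun _ => false].
Definition bf_one n : bfun n := [ffun _ => true].

Definition wt n (u : vec n) : nat := #|[set i | u i]|.

Definition covered n (x u : vec n) : bool := [forall i, x i ==> u i].

(* coefficient of the monomial prod_{i : u i} x_i in the algebraic normal
   form of f (Moebius transform): a_u = XOR_{x <= u} f(x) *)
Definition anf_coef n (f : bfun n) (u : vec n) : bool :=
  \big[addb/false]_(x : vec n | covered x u) f x.

(* algebraic degree: the largest weight of a monomial occurring in the ANF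
   (deg 0 = 0 by convention; it never matters below) *)
Definition deg n (f : bfun n) : nat :=
  \max_(u : vec n | anf_coef f u) wt u.

(* LDA(h): minimum degree of a nonzero annihilator g (h*g = 0).
   Convention: n.+1 (playing the role of +infinity) when no such g exists. *)
Definition LDA n (h : bfun n) : nat :=
  \big[minn/n.+1]_(g : bfun n | (g != bf_zero n) && (bf_mul h g == bf_zero n))
     deg g.

(* mu_k(h): minimum degree of the nonzero elements of
   MUL_k(h) = { h*g : deg g <= k }.  Convention n.+1 if there are none. *)
Definition mu n (k : nat) (h : bfun n) : nat :=
  \big[minn/n.+1]_(g : bfun n | (deg g <= k) && (bf_mul h g != bf_zero n))
     deg (bf_mul h g).

(* Every product (f + 1) g is annihilated by f, and every annihilator g of f
   satisfies (f + 1) g = g. So each nonzero element of MUL_k(f + 1) is a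
   nonzero annihilator of f, giving mu_k(f + 1) >= LDA(f), while a minimal
   annihilator is itself an element of MUL_k(f + 1) once k >= LDA(f). *)
From mathcomp Require Import all_boot all_order.
Import Order.TTheory.

Set Implicit Arguments.
Unset Strict Implicit.
Unset Printing Implicit Defensive.

Lemma wt_le_dim n (u : vec n) : wt u <= n.
Proof. by rewrite /wt -[leqRHS]card_ord max_card. Qed.

Lemma deg_le_dim n (g : bfun n) : deg g <= n.
Proof. by apply/bigmax_leqP => u _; exact: wt_le_dim. Qed.

Section Annihilators.
Variables (n : nat) (f : bfun n).

Local Notation h := (bf_add f (bf_one n)).

Lemma bf_mul_compl_ann (g : bfun n) : bf_mul f (bf_mul h g) = bf_zero n.
Proof. by apply/ffunP => x; rewrite !ffunE; case: (f x). Qed.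

Lemma bf_mul_compl_id (g : bfun n) : bf_mul f g = bf_zero n -> bf_mul h g = g.
Proof.
move=> /ffunP fg0; apply/ffunP => x; move: (fg0 x); rewrite !ffunE.
by case: (f x); case: (g x).
Qed.

Lemma LDA_le : LDA f <= n.+1.
Proof. by rewrite /LDA -minEnat -leEnat bigmin_le_id. Qed.

Lemma LDA_le_mu k : LDA f <= mu k h.
Proof.
rewrite /mu -minEnat -leEnat; apply: le_bigmin => [|g /andP[_ hg0]].
  exact: LDA_le.
by apply: bigmin_le_cond; rewrite hg0 bf_mul_compl_ann eqxx.
Qed.

Lemma LDA_le_bigmin_mu (r : seq nat) : LDA f <= \big[minn/n.+1]_(k <- r) mu k h.
Proof.
rewrite -minEnat -leEnat.
by apply: le_bigmin => [|k _]; [exact: LDA_le | exact: LDA_le_mu].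
Qed.

Lemma mu_le_deg k (g : bfun n) :
  g != bf_zero n -> bf_mul f g = bf_zero n -> deg g <= k -> mu k h <= deg g.
Proof.
move=> g0 /bf_mul_compl_id hg dgk; rewrite /mu -minEnat -leEnat -{1}hg.
by apply: bigmin_le_cond; rewrite leEnat dgk hg g0.
Qed.

Lemma LDA_attained : LDA f <= n ->
  exists2 g, (g != bf_zero n) && (bf_mul f g == bf_zero n) & deg g = LDA f.
Proof.
rewrite /LDA -minEnat.
set ann := fun g : bfun n => (g != bf_zero n) && (bf_mul f g == bf_zero n).
case: (pickP ann) => [g0 ann_g0 | no_ann]; last by rewrite big_pred0 // ltnn.
have deg_bound g : ann g -> deg g <= n.+1 by move=> _; exact/leqW/deg_le_dim.
have [g ann_g ->] := eq_bigmin g0 ann (@deg n) ann_g0 deg_bound.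
by exists g.
Qed.

Lemma mu_eq_LDA k : LDA f <= k <= n -> mu k h = LDA f.
Proof.
case/andP=> Lk kn; have [g /andP[g0 /eqP fg0] dg] := LDA_attained (leq_trans Lk kn).
apply/eqP; rewrite eqn_leq LDA_le_mu andbT -dg.
by apply: mu_le_deg; rewrite ?dg.
Qed.

End Annihilators.

Theorem proposition9 (n : nat) (n_gt0 : 0 < n) (f : bfun n) :
  LDA f = \big[minn/n.+1]_(1 <= k < n.+1) mu k (bf_add f (bf_one n))
  /\ (forall k : nat, 1 <= k <= n -> LDA f <= k ->
        mu k (bf_add f (bf_one n)) = LDA f).
Proof.
split; last by move=> k /andP[_ kn] Lk; rewrite mu_eq_LDA // Lk.
apply/eqP; rewrite eqn_leq LDA_le_bigmin_mu /=.
have [Ln | nL] := leqP (LDA f) n; last first.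
  (* no annihilator exists, so LDA f is the sentinel n.+1 *)
  rewrite (@anti_leq (LDA f) n.+1) ?LDA_le //.
  by rewrite -minEnat -leEnat bigmin_le_id.
set k := maxn 1 (LDA f).
have k_ok : LDA f <= k <= n by rewrite leq_maxr geq_max n_gt0 Ln.
rewrite -(mu_eq_LDA k_ok) -minEnat -leEnat.
by apply: ge_bigmin_seq; rewrite // mem_index_iota leq_maxl ltnS geq_max n_gt0 Ln.
Qed.
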